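(* Let $q\ge 2$, $n\ge1$, $d\ge 2$ be integers and $\boldsymbol{x}\neq\boldsymbol{y}\in\Sigma_q^n$. Then $d_H(\mathcal{R}(\boldsymbol{x}),\mathcal{R}(\boldsymbol{y}))=d$ if and only if there exist integers $s\ge 0$ and $t_1,\dots,t_{s+1}\ge 1$, sequences $\boldsymbol{u},\boldsymbol{w},\boldsymbol{v}_1,\dots,\boldsymbol{v}_s\in\Sigma_q^{\ge0}$, and symbols $a_1,\dots,a_{s+1},b_1,\dots,b_{s+1}\in\Sigma_q$ with $a_i\ne b_i$ for all $i\in[1,s+1]$, such that $$\boldsymbol{x}=(\boldsymbol{u},(\boldsymbol{\alpha}_{t_1}(a_1b_1),\boldsymbol{v}_1),\dots,(\boldsymbol{\alpha}_{t_s}(a_sb_s),\boldsymbol{v}_s),\boldsymbol{\alpha}_{t_{s+1}}(a_{s+1}b_{s+1}),\boldsymbol{w}),$$ $$\boldsymbol{y}=(\boldsymbol{u},(\boldsymbol{\alpha}_{t_1}(b_1a_1),\boldsymbol{v}_1),\dots,(\boldsymbol{\alpha}_{t_s}(b_sa_s),\boldsymbol{v}_s),\boldsymbol{\alpha}_{t_{s+1}}(b_{s+1}a_{s+1}),\boldsymbol{w}),$$ and the following conditions hold: (i) for every $i\in[1,s]$ with $\boldsymbol{v}_i=\emptyset$, the multisets satisfy $\{\{\alpha_{t_i}(a_ib_i)[t_i],a_{i+1}\}\}\neq\{\{\alpha_{t_i}(b_ia_i)[t_i],b_{i+1}\}\}$; (ii) $d=2(s+1)-|\{i\in[1,s]: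\boldsymbol{v}_i=\emptyset\}|$.
   Context: $\Sigma_q=\{0,1,\dots,q-1\}$; $[i,j]=\{i,\dots,j\}$; $\Sigma_q^{\ge 0}$ is the set of all finite sequences over $\Sigma_q$, including the empty sequence $\emptyset$; $(\cdot,\cdot)$ denotes concatenation. For $\boldsymbol{x}\in\Sigma_q^n$, $x[i]$ is its $i$-th entry, with the convention $x[i]=0$ for $i\notin[1,n]$. The $2$-read vector of $\boldsymbol{x}$ is $\mathcal{R}(\boldsymbol{x})$, the vector of length $n+1$ whose $i$-th entry ($i\in[1,n+1]$) is the multiset $\{\{x[i-1],x[i]\}\}$. $d_H$ is Hamming distance. For distinct $a,b$ and $t\ge 0$, $\boldsymbol{\alpha}_t(ab)$ is the alternating sequence $abab\cdots$ of length $t$; $\alpha_t(ab)[t]$ denotes its last entry. *)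

(* Sequences over Sigma_q are [seq nat] whose entries are < q. *)
From mathcomp Require Import all_boot.
Set Implicit Arguments. Unset Strict Implicit. Unset Printing Implicit Defensive.

Definition over_q (q : nat) (s : seq nat) : bool := all (fun a => a < q) s.

(* 1-indexed entry x[i], with x[i] = 0 for i outside [1, size x] *)
Definition xat (x : seq nat) (i : nat) : nat :=
  if (1 <= i <= size x) then nth 0 x i.-1 else 0.

(* the multiset {{a,b}} of size two, represented canonically as a sorted pair *)
Definition mset2 (a b : nat) : nat * nat := (minn a b, maxn a b).

(* 2-read vector: length (size x).+1, i-th entry {{x[i-1], x[i]}}, i in [1, n+1] *)
Definition read2 (x : seq nat) : seq (nat * nat) :=
  [seq mset2 (xat x i.-1) (xat x i) | i <- iota 1 (size x).+1].

Definition dH {T : eqType} (s t : seq T) : nat :=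
  count (fun p : T * T => p.1 != p.2) (zip s t).

Definition alt (t a b : nat) : seq nat := mkseq (fun i => if odd i then b else a) t.

Definition alt_last (t a b : nat) : nat := xat (alt t a b) t.

(* (u, (alpha_{t_1}(a_1 b_1), v_1), ..., (alpha_{t_s}(a_s b_s), v_s),
    alpha_{t_{s+1}}(a_{s+1} b_{s+1}), w) *)
Definition build (u w : seq nat) (s : nat) (t a b : nat -> nat)
    (v : nat -> seq nat) : seq nat :=
  u ++ flatten [seq alt (t i) (a i) (b i) ++ v i | i <- iota 1 s]
    ++ alt (t s.+1) (a s.+1) (b s.+1) ++ w.

From mathcomp Require Import all_boot zify.
Set Implicit Arguments. Unset Strict Implicit. Unset Printing Implicit Defensive.

(* Inside a swapped alternating block [alt t a b] / [alt t b a] every 2-read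
   is the same multiset {{a, b}} in both sequences, so the 2-read vectors can
   only differ at the two reads straddling the ends of a block.  Both of them
   differ: the one entering the block because [a != b] (or by (i) when it is
   also the read leaving the previous block), the one leaving it because the
   last symbols of the two blocks differ.  Each block thus contributes two
   differing reads, except that two blocks separated by an empty [v i] share
   one.  Conversely, starting at the first position where [x] and [y] differ,
   the longest prefix on which [y] is [x] with the pair of letters swapped is
   a swapped alternating block, and its maximality is exactly condition (i);
   the rest of the sequences decomposes recursively. *)

Lemma mset2C a b : mset2 a b = mset2 b a.
Proof. by rewrite /mset2 minnC maxnC. Qed.

Lemma eq_mset2r z c d : (mset2 c z == mset2 d z) = (c == d).
Proof. by apply/eqP/eqP => [[]|->] //; lia. Qed.

Lemma mset2_eq_swap a b c d : mset2 a b = mset2 c d -> a != c -> a = d /\ b = c.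
Proof. by rewrite /mset2 => -[] ? ? /eqP ?; split; lia. Qed.

Lemma size_alt t a b : size (alt t a b) = t.
Proof. by rewrite size_mkseq. Qed.

Lemma altS t a b : alt t.+1 a b = a :: alt t b a.
Proof.
rewrite /alt /mkseq /= -[1]/(1 + 0) iotaDl -map_comp.
by congr cons; apply: eq_map => i /=; case: (odd i).
Qed.

Lemma alt_lastE t a b : alt_last t.+1 a b = last a (alt t b a).
Proof. by rewrite /alt_last /xat size_alt leqnn altS (last_nth 0) size_alt. Qed.

Lemma alt_lastS t a b : 0 < t -> alt_last t.+1 a b = alt_last t b a.
Proof. by case: t => // t _; rewrite !alt_lastE altS. Qed.

Lemma alt_last_neq t a b : 0 < t -> a != b -> alt_last t a b != alt_last t b a.
Proof.
elim: t a b => // [[|t]] IH a b _ neq_ab; first by rewrite !alt_lastE.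
by rewrite 2?(@alt_lastS t.+1) // IH // eq_sym.
Qed.

Definition dreads (p p' : nat) (xs ys : seq nat) : nat :=
  dH (pairmap mset2 p xs) (pairmap mset2 p' ys).

Lemma dH_read2 x y : dH (read2 x) (read2 y) = dreads 0 0 (rcons x 0) (rcons y 0).
Proof.
suff read2E z : read2 z = pairmap mset2 0 (rcons z 0) by rewrite !read2E.
have nth_rcons0 j : nth 0 (rcons z 0) j = if j < size z then nth 0 z j else 0.
  by rewrite nth_rcons; case: ltnP => // _; case: eqP.
apply: (@eq_from_nth _ (0, 0)); first by rewrite size_map size_iota size_pairmap size_rcons.
move=> i; rewrite size_map size_iota => lt_i.
rewrite (nth_map 0) ?size_iota // nth_iota // (nth_pairmap 0) ?size_rcons //.
by rewrite /xat add1n /= nth_rcons0; congr mset2; case: i {lt_i} => //= i; rewrite nth_rcons0.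
Qed.

Lemma dreads_cons p p' x xs y ys :
  dreads p p' (x :: xs) (y :: ys) = (mset2 p x != mset2 p' y) + dreads x y xs ys.
Proof. by []. Qed.

Lemma dreads_cat p p' xs1 xs2 ys1 ys2 : size xs1 = size ys1 ->
  dreads p p' (xs1 ++ xs2) (ys1 ++ ys2) =
  dreads p p' xs1 ys1 + dreads (last p xs1) (last p' ys1) xs2 ys2.
Proof.
by move=> eq_sz; rewrite /dreads /dH !pairmap_cat zip_cat ?count_cat ?size_pairmap.
Qed.

Lemma dreads_id c xs : dreads c c xs xs = 0.
Proof. by elim: xs c => //= x xs IH c; rewrite dreads_cons IH eqxx. Qed.

Lemma dreads_shared p p' z zs R R' :
  dreads p p' (z :: zs ++ R) (z :: zs ++ R') =
  (p != p') + dreads (last z zs) (last z zs) R R'.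
Proof. by rewrite dreads_cons eq_mset2r dreads_cat // dreads_id. Qed.

Lemma dreads_alt_swapped t a b R R' :
  dreads a b (alt t b a ++ R) (alt t a b ++ R') =
  dreads (last a (alt t b a)) (last b (alt t a b)) R R'.
Proof.
elim: t a b => // t IH a b.
by rewrite !altS !cat_cons dreads_cons IH mset2C eqxx.
Qed.

Lemma dreads_alt p p' t a b R R' : 0 < t ->
  dreads p p' (alt t a b ++ R) (alt t b a ++ R') =
  (mset2 p a != mset2 p' b) + dreads (alt_last t a b) (alt_last t b a) R R'.
Proof.
by case: t => // t _; rewrite !altS !cat_cons dreads_cons dreads_alt_swapped !alt_lastE.
Qed.

Lemma build_prefix u w s t a b v : build u w s t a b v = u ++ build [::] w s t a b v.
Proof. by []. Qed.

Lemma buildS u w s t a b v :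
  build u w s.+1 t a b v =
  u ++ alt (t 1) (a 1) (b 1) ++ v 1 ++
    build [::] w s (t \o succn) (a \o succn) (b \o succn) (v \o succn).
Proof. by rewrite /build /= -[2]/(1 + 1) iotaDl -map_comp !catA. Qed.

Lemma rcons_build u w s t a b v z :
  rcons (build u w s t a b v) z = build u (rcons w z) s t a b v.
Proof. by rewrite /build !rcons_cat. Qed.

Lemma head_build w s t a b v : 0 < t 1 -> head 0 (build [::] w s t a b v) = a 1.
Proof. by case: s => [|s]; rewrite ?buildS /build /=; case: (t 1) => // k; rewrite altS. Qed.

Lemma eq_build u w s t a b v t' a' b' v' :
  (forall i, 0 < i -> [/\ t i = t' i, a i = a' i, b i = b' i & v i = v' i]) ->
  build u w s t a b v = build u w s t' a' b' v'.
Proof.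
move=> eq_tabv; rewrite /build; have [-> -> -> _] := eq_tabv s.+1 isT.
congr (_ ++ (flatten _ ++ _)); apply/eq_in_map => i; rewrite mem_iota => /andP[i_gt0 _].
by have [-> -> -> ->] := eq_tabv i i_gt0.
Qed.

Lemma over_q_build q u w s t a b v :
  (forall i, 1 <= i <= s.+1 -> 0 < t i) -> over_q q (build u w s t a b v) ->
  [/\ over_q q u, over_q q w, forall i, 1 <= i <= s -> over_q q (v i)
    & forall i, 1 <= i <= s.+1 -> a i < q].
Proof.
move=> t_gt0; rewrite /over_q /build !all_cat => /and4P[-> q_blocks q_last ->].
have in_blocks i z : 1 <= i <= s -> z \in alt (t i) (a i) (b i) ++ v i ->
    z \in flatten [seq alt (t i) (a i) (b i) ++ v i | i <- iota 1 s].
  move=> i_s z_in; apply/flattenP; exists (alt (t i) (a i) (b i) ++ v i) => //.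
  by apply: map_f; rewrite mem_iota; lia.
split=> // i i_s.
  by apply/allP => z z_v; apply: (allP q_blocks); rewrite (in_blocks i) // mem_cat z_v orbT.
have a_in : a i \in alt (t i) (a i) (b i).
  by have := t_gt0 i i_s; case: (t i) => // k _; rewrite altS mem_head.
have [e | ne_is] := eqVneq i s.+1; first by rewrite e in a_in *; apply: (allP q_last).
by apply: (allP q_blocks); rewrite (in_blocks i) ?mem_cat ?a_in //; lia.
Qed.

Definition blocks_wf (s : nat) (t a b : nat -> nat) (v : nat -> seq nat) : Prop :=
  (forall i, 1 <= i <= s.+1 -> 0 < t i /\ a i != b i) /\
  (forall i, 1 <= i <= s -> v i = [::] ->
     mset2 (alt_last (t i) (a i) (b i)) (a i.+1)
       != mset2 (alt_last (t i) (b i) (a i)) (b i.+1)).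

Lemma blocks_wf_behead s t a b v : blocks_wf s.+1 t a b v ->
  blocks_wf s (t \o succn) (a \o succn) (b \o succn) (v \o succn).
Proof. by case=> blocks junctions; split=> i i_s; [apply: blocks | apply: junctions]; lia. Qed.

Definition consf {A} (x : A) (f : nat -> A) (i : nat) : A := if i <= 1 then x else f i.-1.

Lemma build_consf u w s t0 a0 b0 v0 t a b v :
  build u w s.+1 (consf t0 t) (consf a0 a) (consf b0 b) (consf v0 v) =
  u ++ alt t0 a0 b0 ++ v0 ++ build [::] w s t a b v.
Proof. by rewrite buildS; do 3 congr (_ ++ _); apply: eq_build => -[]. Qed.

Lemma blocks_wf_consf s t0 a0 b0 v0 t a b v :
  0 < t0 -> a0 != b0 -> blocks_wf s t a b v ->
  (v0 = [::] -> mset2 (alt_last t0 a0 b0) (a 1) != mset2 (alt_last t0 b0 a0) (b 1)) ->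
  blocks_wf s.+1 (consf t0 t) (consf a0 a) (consf b0 b) (consf v0 v).
Proof.
move=> t0_gt0 ne_ab0 [blocks junctions] junction0.
by split=> -[|[|i]] //= i_s; [apply: blocks | apply: junctions]; lia.
Qed.

Lemma dreads_build s t a b v w p p' :
  blocks_wf s t a b v -> w != [::] -> mset2 p (a 1) != mset2 p' (b 1) ->
  dreads p p' (build [::] w s t a b v) (build [::] w s t b a v)
    + count (fun i => v i == [::]) (iota 1 s) = (s.+1).*2.
Proof.
elim: s => [|s IH] in t a b v p p' * => wf w_nil ne_p;
  have [t1_gt0 ne_ab1] := wf.1 1 isT.
  rewrite /build /= dreads_alt // ne_p; case: w w_nil => // z zs _.
  by rewrite -[zs]cats0 dreads_shared alt_last_neq.
have ne_ab2 := ((blocks_wf_behead wf).1 1 isT).2.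
have count_iotaS : count (fun i => v i == [::]) (iota 1 s.+1) =
    (v 1 == [::]) + count (fun i => (v \o succn) i == [::]) (iota 1 s).
  by rewrite /= -[2]/(1 + 1) iotaDl count_map.
rewrite !buildS !cat0s dreads_alt // ne_p count_iotaS.
case v1: (v 1) => [|z zs] /=; rewrite ?dreads_shared ?alt_last_neq //.
  by have /= := IH _ _ _ _ _ _ (blocks_wf_behead wf) w_nil (wf.2 1 isT v1); lia.
have /= := IH _ _ _ _ (last z zs) (last z zs) (blocks_wf_behead wf) w_nil.
by rewrite !(mset2C (last z zs)) eq_mset2r => /(_ ne_ab2); lia.
Qed.

Lemma dist_read2_build u w s t a b v : blocks_wf s t a b v ->
  dH (read2 (build u w s t a b v)) (read2 (build u w s t b a v))
    + count (fun i => v i == [::]) (iota 1 s) = (s.+1).*2.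
Proof.
move=> wf; have [_ ne_ab1] := wf.1 1 isT.
rewrite dH_read2 !rcons_build !(build_prefix u) dreads_cat // dreads_id add0n.
apply: dreads_build => //; first by case: w.
by rewrite !(mset2C (last 0 u)) eq_mset2r.
Qed.

Lemma common_prefix (xs ys : seq nat) : size xs = size ys -> xs != ys ->
  exists u x0 xr y0 yr, [/\ xs = u ++ x0 :: xr, ys = u ++ y0 :: yr & x0 != y0].
Proof.
elim: xs ys => [|x xs IH] [|y ys] //= [eq_sz] ne_xy.
have [exy | ne_x] := eqVneq x y; last by exists [::], x, xs, y, ys.
have [|u [x0 [xr [y0 [yr [-> -> ne0]]]]]] := IH ys eq_sz.
  by rewrite exy eqseq_cons eqxx in ne_xy.
by exists (x :: u), x0, xr, y0, yr; rewrite exy.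
Qed.

Lemma alt_block_split x0 y0 xr yr : size xr = size yr -> x0 != y0 ->
  exists t xr' yr', [/\ 0 < t, x0 :: xr = alt t x0 y0 ++ xr',
    y0 :: yr = alt t y0 x0 ++ yr', size xr' = size yr' &
    mset2 (alt_last t x0 y0) (head 0 xr') != mset2 (alt_last t y0 x0) (head 0 yr')].
Proof.
elim: xr yr x0 y0 => [|x1 xr IH] [|y1 yr] //= x0 y0 eq_sz ne0.
  by exists 1, [::], [::]; rewrite /= eq_mset2r.
case: eq_sz => eq_sz; have [eq_m | ne_m] := eqVneq (mset2 x0 x1) (mset2 y0 y1); last first.
  by exists 1, (x1 :: xr), (y1 :: yr); rewrite /= eq_sz.
have [ex0 ex1] := mset2_eq_swap eq_m ne0; rewrite ex0 in ne0 *; rewrite ex1.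
have [|t [xr' [yr' [t_gt0 -> -> eq_sz' maximal]]]] := IH yr y0 y1 eq_sz.
  by rewrite eq_sym.
by exists t.+1, xr', yr'; rewrite !altS !alt_lastS.
Qed.

Lemma build_decomposition x y : size x = size y -> x != y ->
  exists s t u w v a b,
    [/\ blocks_wf s t a b v, x = build u w s t a b v & y = build u w s t b a v].
Proof.
have [n] := ubnP (size x); elim: n => // n IH in x y *; rewrite ltnS => le_xn eq_sz ne_xy.
have [u [x0 [xr [y0 [yr [ex ey ne0]]]]]] := common_prefix eq_sz ne_xy.
have eq_szr : size xr = size yr by move: eq_sz; rewrite ex ey !size_cat /=; lia.
have [t0 [xr' [yr' [t0_gt0 ex0 ey0 eq_sz' maximal]]]] := alt_block_split eq_szr ne0.
rewrite ex ey ex0 ey0.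
have [<- | ne_r] := eqVneq xr' yr'.
  exists 0, (fun=> t0), u, xr', (fun=> [::]), (fun=> x0), (fun=> y0).
  by split=> //; split=> -[|i].
have [|s [t [u' [w [v [a [b [wf exr eyr]]]]]]]] := IH xr' yr' _ eq_sz' ne_r.
  by move: le_xn; rewrite ex ex0 !size_cat size_alt; lia.
subst xr' yr'.
exists s.+1, (consf t0 t), u, w, (consf u' v), (consf x0 a), (consf y0 b).
split; rewrite ?build_consf //; apply: blocks_wf_consf => // u'_nil.
by move: maximal; rewrite u'_nil !head_build //; have [] := wf.1 1 isT.
Qed.

Theorem theorem2 (q n d : nat) (x y : seq nat) :
  2 <= q -> 1 <= n -> 2 <= d ->
  size x = n -> size y = n -> over_q q x -> over_q q y -> x != y ->
  (dH (read2 x) (read2 y) = d <->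
   exists (s : nat) (t : nat -> nat) (u w : seq nat) (v : nat -> seq nat)
          (a b : nat -> nat),
     (forall i, 1 <= i <= s.+1 ->
            [/\ 1 <= t i, a i < q, b i < q & a i != b i]) /\
         over_q q u /\ over_q q w /\
         (forall i, 1 <= i <= s -> over_q q (v i)) /\
         x = build u w s t a b v /\
         y = build u w s t b a v /\
         (forall i, 1 <= i <= s -> v i = [::] ->
            mset2 (alt_last (t i) (a i) (b i)) (a i.+1)
              != mset2 (alt_last (t i) (b i) (a i)) (b i.+1)) /\
       d = 2 * s.+1 - count (fun i => v i == [::]) (iota 1 s)).
Proof.
move=> _ _ _ sz_x sz_y q_x q_y ne_xy; split=> [<- | ].
  have [|s [t [u [w [v [a [b [wf ex ey]]]]]]]] := build_decomposition _ ne_xy.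
    by rewrite sz_x sz_y.
  have [blocks junctions] := wf.
  have t_gt0 i : 1 <= i <= s.+1 -> 0 < t i by case/blocks.
  rewrite ex in q_x; rewrite ey in q_y.
  have [q_u q_w q_v q_a] := over_q_build t_gt0 q_x.
  have [_ _ _ q_b] := over_q_build t_gt0 q_y.
  have blocks_q i : 1 <= i <= s.+1 -> [/\ 1 <= t i, a i < q, b i < q & a i != b i].
    by move=> i_s; have [t_i ne_ab] := blocks i i_s; rewrite t_i ne_ab q_a ?q_b.
  exists s, t, u, w, v, a, b; do 7 (split => //).
  by have := dist_read2_build u w wf; rewrite -ex -ey; lia.
move=> [s [t [u [w [v [a [b [blocks [_ [_ [_ [-> [-> [junctions ->]]]]]]]]]]]]]].
have wf : blocks_wf s t a b v by split=> // i /blocks[].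
by have := dist_read2_build u w wf; lia.
Qed.
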